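(* Let $\mathbf{P}=\{p_n(x)\}_{n\ge0}$ be a sequence of complex polynomials with $\deg p_n=n$, $p_0=1$, and $p_n(0)=0$ for all $n\ge1$. Then for $n\ge1$ and $1\le k\le n$, $$S_2(n,k;\mathbf{P})=\frac{1}{k!}\sum_{j=1}^{k}\binom{n-j}{k-j}A_{n,j-1}(\mathbf{P}).$$
   Context: $S_2(n,k;\mathbf{P})$ is defined by $p_n(x)=\sum_{k=0}^{n}S_2(n,k;\mathbf{P})(x)_k$, with $(x)_0=1$, $(x)_k=x(x-1)\cdots(x-k+1)$. The Eulerian numbers $A_{n,k}(\mathbf{P})$ ($0\le k\le n$) are the unique coefficients with $p_n(x)=\sum_{k=0}^{n}A_{n,k}(\mathbf{P})\binom{x+n-k-1}{n}$, where $\binom{y}{n}=y(y-1)\cdots(y-n+1)/n!$. *)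

From HB Require Import structures.
From mathcomp Require Import all_boot all_order all_algebra.
From mathcomp Require Import reals.
From mathcomp Require Import complex.
Set Implicit Arguments. Unset Strict Implicit. Unset Printing Implicit Defensive.
Import Order.TTheory GRing.Theory Num.Theory.
Local Open Scope ring_scope.

Definition falling_poly (F : ringType) (k : nat) : {poly F} :=
  \prod_(i < k) ('X - (i%:R)%:P).

Definition binom_poly (F : fieldType) (n : nat) : {poly F} :=
  (n`!%:R)^-1 *: \prod_(i < n) ('X - (i%:R)%:P).

Definition eulerian_basis (F : fieldType) (n k : nat) : {poly F} :=
  binom_poly F n \Po ('X + ((n%:Z - k%:Z - 1)%:~R)%:P).

From mathcomp Require Import all_boot all_order all_algebra.
From mathcomp Require Import reals complex.
From mathcomp Require Import zify.
Import Order.TTheory GRing.Theory Num.Theory.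

(* Compare both expansions of p_n at the points x = 0, 1, ..., n. There (x)_k
   equals k! C(m, k) and binom(x + n - k - 1, n) equals C(m + n - k - 1, n).
   Substituting the claimed values of S_2 and exchanging the triangular double
   sum, the Vandermonde-type identity
   sum_k C(n - j, k - j) C(m, k) = C(m + n - j, n) turns the falling-factorial
   side into the Eulerian side, up to the term A_{n,n}; that coefficient
   vanishes because p_n(0) = 0, binom(-1, n) <> 0, and every other Eulerian
   basis polynomial vanishes at 0. Two polynomials of degree at most n that
   agree at n + 1 points are equal, and coefficients with respect to the
   falling factorials are unique. *)

Lemma Vandermonde_shift a m r :
  (\sum_(t < a.+1) 'C(a, t) * 'C(m, r + t) = 'C(m + a, r + a))%N.
Proof.
elim: a r => [|a IHa] r.
  by rewrite big_ord_recl big_ord0 !addn0 bin0 mul1n.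
rewrite big_ord_recl /= bin0 mul1n.
under eq_bigr => t _ do rewrite /bump /= add1n binS mulnDl.
rewrite big_split /=.
under [X in _ + (_ + X)]eq_bigr => t _ do rewrite -addSnnS.
rewrite IHa addnA.
have -> : ('C(m, r + 0) + \sum_(t < a.+1) 'C(a, t.+1) * 'C(m, r + t.+1)
          = \sum_(t < a.+2) 'C(a, t) * 'C(m, r + t))%N.
  by rewrite [RHS]big_ord_recl /= bin0 mul1n.
rewrite big_ord_recr /= bin_small // mul0n addn0 IHa.
by rewrite !addnS binS addSn addnC.
Qed.

Lemma sum_bin_sub_mul_bin n m j : (j <= n)%N ->
  (\sum_(j <= k < n.+1) 'C(n - j, k - j) * 'C(m, k) = 'C(m + n - j, n))%N.
Proof.
move=> le_jn; rewrite -{1}[j]add0n big_addn subSn // big_mkord.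
under eq_bigr => t _ do rewrite addnK addnC.
by rewrite Vandermonde_shift addnBA // subnKC.
Qed.

Local Open Scope ring_scope.

Lemma sum_nat_triangle (V : nmodType) m n (f : nat -> nat -> V) :
  \sum_(k < n) \sum_(m <= j < k.+1) f j k
  = \sum_(m <= j < n) \sum_(j <= k < n) f j k.
Proof.
rewrite -(big_mkord xpredT (fun k => \sum_(m <= j < k.+1) f j k)).
transitivity (\sum_(0 <= k < n) \sum_(m <= j < n | (j <= k)%N) f j k).
  by apply: eq_big_nat => k /andP[_ kn]; rewrite (big_nat_widen m k.+1 n).
rewrite (exchange_big_dep_nat predT) //=.
by apply: eq_bigr => j _; rewrite [RHS](big_nat_widenl j 0 n).
Qed.

Lemma poly_eq_nat_points (F : numDomainType) (p q : {poly F}) N :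
  (size p <= N)%N -> (size q <= N)%N ->
  (forall m, (m < N)%N -> p.[m%:R] = q.[m%:R]) -> p = q.
Proof.
move=> sp sq pq; apply/eqP; rewrite -subr_eq0; apply/eqP.
apply: (@roots_geq_poly_eq0 _ _ [seq m%:R | m <- iota 0 N]).
- apply/allP => x /mapP[m]; rewrite mem_iota => /andP[_ ltmN] ->.
  by rewrite rootE !hornerE pq // subrr.
- by rewrite map_inj_uniq ?iota_uniq // => a b /eqP; rewrite eqr_nat => /eqP.
- rewrite size_map size_iota (leq_trans (size_polyD _ _)) //.
  by rewrite size_polyN geq_max sp sq.
Qed.

Section FallingFactorial.
Variable F : comNzRingType.

Lemma falling_poly_monic k : falling_poly F k \is monic.
Proof. exact: monic_prod_XsubC. Qed.

Lemma size_falling_poly k : size (falling_poly F k) = k.+1.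
Proof.
by rewrite /falling_poly size_prod_XsubC /index_enum -enumT size_enum_ord.
Qed.

Lemma horner_falling_poly_nat k m : (falling_poly F k).[m%:R] = (m ^_ k)%:R.
Proof.
rewrite /falling_poly horner_prod.
elim: k => [|k IHk]; first by rewrite big_ord0.
rewrite big_ord_recr /= IHk hornerXsubC ffactnSr natrM.
have [le_km|lt_mk] := leqP k m; first by rewrite natrB.
by rewrite ffact_small // mulr0n !mul0r.
Qed.

Lemma size_falling_expansion N (c : nat -> F) :
  (size (\sum_(k < N) c k *: falling_poly F k)%R <= N)%N.
Proof.
rewrite (leq_trans (size_sum _ _ _)) //; apply/bigmax_leqP => k _.
by rewrite (leq_trans (size_scale_leq _ _)) // size_falling_poly.
Qed.

Lemma falling_expansion_eq0 N (c : nat -> F) :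
  \sum_(k < N) c k *: falling_poly F k = 0 -> forall k, (k < N)%N -> c k = 0.
Proof.
elim: N => [//|N IHN]; rewrite big_ord_recr /= => sum0.
have cN0 : c N = 0.
  have := congr1 (fun q : {poly F} => q`_N) sum0.
  rewrite coefD coefZ coef0 nth_default ?add0r; last first.
    exact: size_falling_expansion.
  have /monicP := falling_poly_monic N.
  by rewrite /lead_coef size_falling_poly => ->; rewrite mulr1.
move=> k; rewrite ltnS leq_eqVlt => /orP[/eqP -> //|ltkN].
by apply: IHN => //; move: sum0; rewrite cN0 scale0r addr0.
Qed.

Lemma eq_falling_expansion N (c d : nat -> F) :
  \sum_(k < N) c k *: falling_poly F k = \sum_(k < N) d k *: falling_poly F k ->
  forall k, (k < N)%N -> c k = d k.
Proof.
move=> cd k ltkN; apply/eqP; rewrite -subr_eq0; apply/eqP; move: k ltkN.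
apply: falling_expansion_eq0.
by rewrite (eq_bigr _ (fun k _ => scalerBl _ _ _)) sumrB cd subrr.
Qed.

End FallingFactorial.

Section EulerianExpansion.
Variable F : numFieldType.

Lemma horner_binom_poly_nat n N : (binom_poly F n).[N%:R] = 'C(N, n)%:R.
Proof.
rewrite /binom_poly hornerZ -/(falling_poly F n) horner_falling_poly_nat.
rewrite -bin_ffact natrM mulrC mulrK //.
by rewrite unitfE pnatr_eq0 -lt0n fact_gt0.
Qed.

Lemma horner_eulerian_basis_nat n k m : (k < m + n)%N ->
  (eulerian_basis F n k).[m%:R] = 'C(m + n - k - 1, n)%:R.
Proof.
move=> lt_k_mn; rewrite /eulerian_basis horner_comp hornerD hornerX hornerC.
have -> : (m%:R + (n%:Z - k%:Z - 1)%:~R : F) = (m + n - k - 1)%N%:R.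
  have shift : ((m + n - k - 1)%N%:Z = m%:Z + (n%:Z - k%:Z - 1))%R by lia.
  by rewrite -[RHS]/(((m + n - k - 1)%N%:Z)%:~R : F) shift [RHS]intrD.
exact: horner_binom_poly_nat.
Qed.

Lemma horner0_eulerian_basis_diag n : (eulerian_basis F n n).[0] != 0.
Proof.
rewrite /eulerian_basis horner_comp hornerD hornerX hornerC add0r.
rewrite subrr sub0r rmorphN1 /binom_poly hornerZ horner_prod.
rewrite mulf_neq0 ?invr_eq0 ?pnatr_eq0 -?lt0n ?fact_gt0 //.
by apply/prodf_neq0 => i _; rewrite hornerXsubC -opprD oppr_eq0 nat1r pnatr_eq0.
Qed.

Lemma size_eulerian_basis n k : (size (eulerian_basis F n k) <= n.+1)%N.
Proof.
have := size_scale_leq (n`!%:R^-1) (falling_poly F n).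
rewrite size_falling_poly => size_binom.
rewrite /eulerian_basis (leq_trans (size_comp_poly_leq _ _)) //.
rewrite size_XaddC muln1.
by rewrite ltnS -subn1 leq_subLR add1n; exact: size_binom.
Qed.

Lemma eulerian_expansion_coef_diag (a : nat -> F) n :
  (\sum_(k < n.+1) a k *: eulerian_basis F n k).[0] = 0 -> a n = 0.
Proof.
rewrite horner_sum big_ord_recr /= big1 ?add0r => [|k _].
  rewrite hornerZ => /eqP.
  by rewrite mulf_eq0 (negPf (horner0_eulerian_basis_diag n)) orbF => /eqP.
have := horner_eulerian_basis_nat n k 0.
rewrite mulr0n add0n ltn_ord => /(_ isT).
rewrite hornerZ => ->.
by rewrite bin_small ?mulr0 //; have := ltn_ord k; lia.
Qed.

Definition stirling_of_eulerian (a : nat -> F) n k : F :=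
  (k`!%:R)^-1 * \sum_(1 <= j < k.+1) 'C(n - j, k - j)%:R * a (j - 1)%N.

Lemma stirling_of_eulerian_ffact (a : nat -> F) n m :
  \sum_(k < n.+1) stirling_of_eulerian a n k * (m ^_ k)%:R
  = \sum_(j < n) a j * 'C(m + n - j - 1, n)%:R.
Proof.
have ffact_fact k (x : F) : (k`!%:R)^-1 * x * (m ^_ k)%:R = x * 'C(m, k)%:R.
  rewrite -bin_ffact natrM mulrAC [_ * k`!%:R]mulrC mulKf 1?mulrC //.
  by rewrite pnatr_eq0 -lt0n fact_gt0.
under eq_bigr => k _ do rewrite ffact_fact mulr_suml.
rewrite (sum_nat_triangle _ 1 n.+1
  (fun j k => 'C(n - j, k - j)%:R * a (j - 1)%N * 'C(m, k)%:R)).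
rewrite big_add1 /= big_mkord.
apply: eq_bigr => j _; rewrite subn1 /=.
under eq_bigr => k _ do rewrite mulrAC -natrM.
rewrite -mulr_suml -natr_sum sum_bin_sub_mul_bin ?ltn_ord // mulrC.
by rewrite subnS -subn1.
Qed.

Lemma falling_expansion_of_eulerian (a : nat -> F) n : a n = 0 ->
  \sum_(k < n.+1) stirling_of_eulerian a n k *: falling_poly F k
  = \sum_(k < n.+1) a k *: eulerian_basis F n k.
Proof.
move=> an0; apply: (@poly_eq_nat_points _ _ _ n.+1).
- exact: size_falling_expansion.
- rewrite (leq_trans (size_sum _ _ _)) //; apply/bigmax_leqP => k _.
  exact: leq_trans (size_scale_leq _ _) (size_eulerian_basis _ _).
move=> m _; rewrite !horner_sum.
under eq_bigr => k _ do rewrite hornerZ horner_falling_poly_nat.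
rewrite stirling_of_eulerian_ffact big_ord_recr /= an0 scale0r horner0 addr0.
by apply: eq_bigr => j _; rewrite hornerZ horner_eulerian_basis_nat // ltn_addl.
Qed.

End EulerianExpansion.

Theorem theorem3p3 (R : realType) (p : nat -> {poly R[i]})
  (hdeg : forall n, size (p n) = n.+1)
  (hp0 : p 0%N = 1)
  (hpz : forall n, (1 <= n)%N -> (p n).[0] = 0)
  (S2 A : nat -> nat -> R[i])
  (hS2 : forall n, p n = \sum_(k < n.+1) S2 n k *: falling_poly R[i] k)
  (hA : forall n, p n = \sum_(k < n.+1) A n k *: eulerian_basis R[i] n k)
  (n k : nat) (hn : (1 <= n)%N) (hk1 : (1 <= k)%N) (hkn : (k <= n)%N) :
  S2 n k = (k`!%:R)^-1 *
    \sum_(1 <= j < k.+1) ('C(n - j, k - j))%:R * A n (j - 1)%N.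
Proof.
have Ann0 : A n n = 0.
  by apply: eulerian_expansion_coef_diag; rewrite -hA hpz.
have := hS2 n; rewrite hA -(falling_expansion_of_eulerian _ _ _ Ann0).
by move=> /eq_falling_expansion /(_ k hkn) <-.
Qed.
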